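(* Let $(X,\mathcal{B},\mu)$ be a standard $\sigma$-finite measure space. Let $\alpha,\beta,\mathcal{C}$ be sub-$\sigma$-algebras of $\mathcal{B}$. Assume that $\mathcal{C}$ is $\sigma$-finite (i.e. $\mu|_{\mathcal{C}}$ is $\sigma$-finite) and non-atomic. Then $$(\mathcal{C}\vee\alpha\vee\beta)^{*}=(\mathcal{C}\vee\alpha)^{*}\vee(\mathcal{C}\vee\beta)^{*}\quad\text{modulo }\mu^{*}.$$
   Context: Poisson suspension of $(X,\mathcal{B},\mu)$: $X^*$ is the space of (counting) measures $\gamma$ on $X$; $\mathcal{B}^*$ is the $\sigma$-algebra generated by the maps $N(B):\gamma\mapsto\gamma(B)$, $B\in\mathcal{B}$. The measure $\mu^*$ is the unique probability measure on $(X^*,\mathcal{B}^* )$ such that, for pairwise disjoint $B_1,\dots,B_k\in\mathcal{B}$, the random variables $N(B_1),\dots,N(B_k)$ are independent. Moreover, each $N(B)$ is Poisson distributed with parameter $\mu(B)$, with $N(B)=\infty$ a.s. if $\mu(B)=\infty$. For a sub-$\sigma$-algebra $\mathcal{C}\subset\mathcal{B}$, $\mathcal{C}^*:=\sigma(\{N(A):A\in\mathcal{C}\})$. *)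

From HB Require Import structures.
From mathcomp Require Import all_boot all_order all_algebra.
From mathcomp Require Import all_classical all_reals all_analysis.
From mathcomp Require Import measurable_realfun.

Set Implicit Arguments.
Unset Strict Implicit.
Unset Printing Implicit Defensive.

Import Order.TTheory GRing.Theory Num.Theory.
Local Open Scope classical_set_scope.
Local Open Scope ring_scope.
Local Open Scope ereal_scope.

Section PoissonSuspension.
Context (R : realType) {d : measure_display} (X : measurableType d).

(** Standard Borel space: Borel-isomorphic to a Borel subset of R
    (Kuratowski: equivalent to being Borel-isomorphic to a Borel subset
    of a Polish space). *)
Definition standard_borel : Prop :=
  exists f : X -> R,
    [/\ injective f, measurable_fun setT f, measurable (range f) &
        forall A : set X, measurable A -> measurable (f @` A)].

Definition is_sub_sigma_algebra (C : set (set X)) : Prop :=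
  sigma_algebra setT C /\ C `<=` measurable.

Definition sjoin (A B : set (set X)) : set (set X) := <<s A `|` B >>.

Definition sigma_finite_on (mu : set X -> \bar R) (C : set (set X)) : Prop :=
  exists F : (set X)^nat,
    [/\ forall n, C (F n), \bigcup_n F n = setT & forall n, mu (F n) < +oo].

Definition atom_on (mu : set X -> \bar R) (C : set (set X)) (A : set X) :=
  [/\ C A, 0 < mu A &
      forall B, C B -> B `<=` A -> mu B = 0 \/ mu (A `\` B) = 0].
Definition non_atomic_on (mu : set X -> \bar R) (C : set (set X)) : Prop :=
  forall A, ~ atom_on mu C A.

Definition counting_measure (g : set X -> \bar R) : Prop :=
  [/\ g set0 = 0,
      semi_sigma_additive g,
      (forall A, measurable A -> g A = +oo \/ exists k : nat, g A = k%:R%:E) &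
      (forall A, ~ measurable A -> g A = 0)].

Definition Xstar := {g : set X -> \bar R | counting_measure g}.

Lemma counting_measure0 : counting_measure (fun _ => 0).
Proof.
split=> //; last by move=> A _; right; exists 0%N.
exact: (@measure_semi_sigma_additive _ _ R (@mzero d X R)).
Qed.

HB.instance Definition _ := gen_eqMixin Xstar.
HB.instance Definition _ := gen_choiceMixin Xstar.
HB.instance Definition _ :=
  isPointed.Build Xstar (exist _ (fun _ => 0) counting_measure0).

Definition N (A : set X) (g : Xstar) : \bar R := sval g A.

Definition star_gen (C : set (set X)) : set (set Xstar) :=
  [set E | exists A (S : set (\bar R)), [/\ C A, measurable S & E = N A @^-1` S]].

Definition star (C : set (set X)) : set (set Xstar) := <<s star_gen C >>.

Definition XstarM := g_sigma_algebraType (star_gen measurable).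

Definition poisson_suspension_measure (mu : set X -> \bar R)
    (P : probability XstarM R) : Prop :=
  (forall (n : nat) (B : 'I_n -> set X) (S : 'I_n -> set (\bar R)),
     (forall i, measurable (B i)) ->
     (forall i j, i != j -> B i `&` B j = set0) ->
     (forall i, measurable (S i)) ->
     P (\bigcap_(i in [set: 'I_n]) (N (B i) @^-1` S i) : set XstarM)
     = (\prod_(i < n) fine (P (N (B i) @^-1` S i : set XstarM)))%R%:E)
  /\
  (forall B, measurable B ->
     (mu B < +oo -> forall k : nat,
        P ([set g | N B g = k%:R%:E] : set XstarM)
        = (expR (- fine (mu B)) * fine (mu B) ^+ k / k`!%:R)%R%:E)
     /\ (mu B = +oo -> P ([set g | N B g = +oo] : set XstarM) = 1)).

Definition eq_mod (P : set XstarM -> \bar R) (F G : set (set XstarM)) : Prop :=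
  (forall A, F A -> exists B, G B /\ P ((A `\` B) `|` (B `\` A)) = 0) /\
  (forall B, G B -> exists A, F A /\ P ((A `\` B) `|` (B `\` A)) = 0).

Definition sjoin_star (F G : set (set XstarM)) : set (set XstarM) :=
  <<s F `|` G >>.

End PoissonSuspension.

From HB Require Import structures.
From mathcomp Require Import all_boot all_order all_algebra.
From mathcomp Require Import all_classical all_reals all_analysis.
From mathcomp Require Import measurable_realfun.
From mathcomp Require Import lra.

(* Let G be (C \/ alpha)^* \/ (C \/ beta)^*; it is contained in
   (C \/ alpha \/ beta)^*, so it suffices to show that every count N(A),
   A in C \/ alpha \/ beta, is measurable for the P-completion of G.
   Fix D in C of finite measure. By non-atomicity, D splits into finitely many
   cells c_j in C of measure at most e. A Poisson count N(c) exceeds 1 with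
   probability at most mu(c)^2, so with probability at least 1 - e mu(D) every
   cell holds at most one point, and then
     N(x & y) = sum_j N(c_j & x) N(c_j & y)     (x in C \/ alpha, x <= D, y in beta),
   a G-measurable function; letting e -> 0, N(x & y) is G-measurable modulo P.
   The sets x & y form a pi-system, the sets A for which N(A & D) is measurable
   modulo P form a lambda-system (complements use that N(D) is a.s. finite),
   and the sigma-finiteness of C on mu removes the restriction to D. *)

Set Implicit Arguments.
Unset Strict Implicit.
Unset Printing Implicit Defensive.

Import Order.TTheory GRing.Theory Num.Theory.
Local Open Scope classical_set_scope.
Local Open Scope ring_scope.
Local Open Scope ereal_scope.

Section sigma_algebra_closure.
Context (T : Type) (C : set (set T)).
Hypothesis salgC : sigma_algebra setT C.

Let salgP := (sigma_algebraP (fun A _ => subsetT A)).1 salgC.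

Lemma sigma_algebraT : C setT. Proof. by case: salgP. Qed.

Lemma sigma_algebraI : setI_closed C. Proof. by case: salgP. Qed.

Lemma sigma_algebraD : setD_closed C.
Proof. by apply/setD_closedP; case: salgP. Qed.

Lemma sigma_algebra_bigI (F : (set T)^nat) : (forall n, C (F n)) ->
  C (\bigcap_n F n).
Proof.
case: salgC => _ CC CU CF; rewrite -[X in C X]setCK -setTD; apply: (CC).
by rewrite setC_bigcap; apply: CU => n; rewrite -setTD; apply: (CC).
Qed.

Lemma sigma_algebra_bigsetU (F : (set T)^nat) n : (forall n, C (F n)) ->
  C (\big[setU/set0]_(i < n) F i).
Proof.
case: salgC => C0 _ CU CF; rewrite -bigcup_mkord bigcup_mkcond; apply: CU => i.
by case: ifP.
Qed.

End sigma_algebra_closure.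

Section nonincreasing_differences.
Context (T : Type) (E : (set T)^nat).
Hypothesis niE : nonincreasing_seq E.

Let subE n m : (n <= m)%N -> E m `<=` E n.
Proof. by move=> nm; apply/subsetPset/niE. Qed.

Lemma bigsetU_nonincreasing_setD n :
  \big[setU/set0]_(j < n) (E j `\` E j.+1) = E 0%N `\` E n.
Proof.
elim: n => [|n IH]; first by rewrite big_ord0 setDv.
rewrite big_ord_recr /= IH; apply/seteqP; split => z.
  move=> [[E0z nEz]|[Ez nESz]]; last by split => //; exact: (subE (leq0n n)).
  by split => // ESz; apply/nEz/(subE _ ESz).
move=> [E0z nESz]; have [Ez|nEz] := pselect (E n z); [right|left]; by split.
Qed.

Lemma trivIset_nonincreasing_setD : trivIset setT (fun j => E j `\` E j.+1).
Proof.
move=> i j _ _ [z [[Eiz nESiz] [Ejz nESjz]]].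
wlog ij : i j Eiz nESiz Ejz nESjz / (i <= j)%N.
  by move=> H; case: (leqP i j) => [|/ltnW] ij; [|apply/esym]; apply: H.
move: ij; rewrite leq_eqVlt => /predU1P[//|ij].
by case: nESiz; apply: (subE ij).
Qed.

End nonincreasing_differences.

Section integer_valued_measure.
Context (R : realType) (d : measure_display) (X : measurableType d).
Variable g : {measure set X -> \bar R}.
Hypothesis g_nat :
  forall A, measurable A -> g A = +oo \/ exists k : nat, g A = k%:R%:E.

Lemma measure_le1_01 A : measurable A -> g A <= 1 -> g A = 0 \/ g A = 1.
Proof.
move=> mA; case: (g_nat mA) => [->|[[|[|k]] ->]]; rewrite ?leye_eq //; auto.
by rewrite lee_fin (ler_nat _ k.+2 1).
Qed.

Lemma measure01_setI_mul c x y : measurable c -> measurable x -> measurable y ->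
  g c <= 1 -> g (c `&` (x `&` y)) = g (c `&` x) * g (c `&` y).
Proof.
move=> mc mx my gc1.
have mcx : measurable (c `&` x) by exact: measurableI.
have mcy : measurable (c `&` y) by exact: measurableI.
have mcxy : measurable (c `&` (x `&` y)) by apply: measurableI => //; exact: measurableI.
have le_gc A : measurable A -> A `<=` c -> g A <= 1.
  by move=> mA Ac; apply: le_trans gc1; apply: le_measure; rewrite ?inE.
have sub_cx : c `&` (x `&` y) `<=` c `&` x by move=> z [? []].
have sub_cy : c `&` (x `&` y) `<=` c `&` y by move=> z [? []].
have [gcx0|gcx1] := measure_le1_01 mcx (le_gc _ mcx (@subIsetl _ _ _)).
  by rewrite gcx0 mul0e; apply: (subset_measure0 _ _ sub_cx).
have [gcy0|gcy1] := measure_le1_01 mcy (le_gc _ mcy (@subIsetl _ _ _)).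
  by rewrite gcy0 mule0; apply: (subset_measure0 _ _ sub_cy).
rewrite gcx1 gcy1 mule1.
(* inclusion-exclusion inside [c], whose measure is at most 1 *)
have : g (c `&` x `|` c `&` y) <= 1 by apply: le_gc; [exact: measurableU|move=> z []; case].
rewrite measureUfinl ?gcx1 ?gcy1 ?ltry // setIACA setIid.
have [->|//] := measure_le1_01 mcxy (le_gc _ mcxy (@subIsetl _ _ _)).
by rewrite sube0 -EFinD lee_fin gerDl ler10.
Qed.

Lemma measure01_partition_setI (c : (set X)^nat) m x y :
  (forall j, measurable (c j)) -> trivIset setT c ->
  (forall j, (j < m)%N -> g (c j) <= 1) -> measurable x -> measurable y ->
  x `<=` \big[setU/set0]_(j < m) c j ->
  g (x `&` y) = \sum_(j < m) g (c j `&` x) * g (c j `&` y).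
Proof.
move=> mc tc c_le1 mx my xc.
have -> : x `&` y = \big[setU/set0]_(j < m) (c j `&` (x `&` y)).
  rewrite -(bigcup_mkord m (fun j => c j `&` (x `&` y))) -setI_bigcupl bigcup_mkord.
  by apply/esym/setIidr => z [/xc].
rewrite (@measure_bigsetU _ _ _ g (fun j => c j `&` (x `&` y))); last 2 first.
- by move=> j; apply: measurableI => //; exact: measurableI.
- by move=> i j _ _ [z [[ci _] [cj _]]]; apply: tc => //; exists z.
by apply: eq_bigr => j _; apply: measure01_setI_mul => //; exact: c_le1.
Qed.

End integer_valued_measure.

Section joins.
Context (R : realType) (d : measure_display) (X : measurableType d).
Implicit Types A B D : set (set X).

Lemma sjoinl A B : A `<=` sjoin A B.
Proof. by move=> E AE; apply: sub_sigma_algebra; left. Qed.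

Lemma sjoinr A B : B `<=` sjoin A B.
Proof. by move=> E BE; apply: sub_sigma_algebra; right. Qed.

Lemma sjoin_sub_measurable A B : A `<=` measurable -> B `<=` measurable ->
  sjoin A B `<=` measurable.
Proof.
move=> Am Bm; apply: smallest_sub; first exact: sigma_algebra_measurable.
by move=> E [/Am|/Bm].
Qed.

Lemma star_mono D (D' : set (set X)) : D `<=` D' -> star (R := R) D `<=` star D'.
Proof.
move=> DD'; apply: sub_sigma_algebra2 => E [A [S [DA mS ->]]].
by exists A, S; split => //; apply: DD'.
Qed.

Lemma star_sub_measurable D : D `<=` measurable ->
  star (R := R) D `<=` (measurable : set (set (XstarM R X))).
Proof. exact: star_mono. Qed.

End joins.

Section counting_measure.
Context (R : realType) (d : measure_display) (X : measurableType d).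
Implicit Types (g : Xstar R X) (A : set X).

Definition count g : set X -> \bar R := sval g.

Lemma count0 g : count g set0 = 0. Proof. by case: g => f []. Qed.

Lemma count_nat g A : measurable A ->
  count g A = +oo \/ exists k : nat, count g A = k%:R%:E.
Proof. by case: g => f [_ _ + _] /=; apply. Qed.

Lemma count_ge0 g A : 0 <= count g A.
Proof.
case: g => f /= [_ _ fN f0]; rewrite /count /=.
have [mA|nmA] := pselect (measurable A); last by rewrite f0.
by case: (fN A mA) => [->|[k ->]]; rewrite ?leey ?lee_fin.
Qed.

Lemma count_sigma_additive g : semi_sigma_additive (count g).
Proof. by case: g => f []. Qed.

HB.instance Definition _ g := isMeasure.Build _ _ _ (count g)
  (count0 g) (count_ge0 g) (@count_sigma_additive g).

Lemma NE A g : N A g = count g A. Proof. by []. Qed.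

Lemma N_measurable (A : set X) (S : set (\bar R)) : measurable A -> measurable S ->
  measurable (N A @^-1` S : set (XstarM R X)).
Proof. by move=> mA mS; apply: sub_sigma_algebra; exists A, S. Qed.

End counting_measure.

Section completion_modulo_null.
Context (R : realType) (d : measure_display) (T : measurableType d).
Variable P : {measure set T -> \bar R}.
Variable G : set (set T).
Hypothesis salgG : sigma_algebra setT G.
Hypothesis measG : G `<=` measurable.

Definition mod_closure : set (set T) :=
  [set E | measurable E /\ exists2 B, G B & P.-negligible (E `+` B)].

Lemma sub_mod_closure : G `<=` mod_closure.
Proof.
by move=> B GB; split; [exact: measG|exists B => //; rewrite setYK; exact: negligible_set0].
Qed.

Lemma mod_closure_measurable E : mod_closure E -> measurable E.
Proof. by case. Qed.

Lemma sigma_algebra_mod_closure : sigma_algebra setT mod_closure.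
Proof.
have [G0 GC GU] := salgG; split.
- exact: sub_mod_closure G0.
- move=> E [mE [B GB nEB]]; split; first exact: measurableD.
  exists (setT `\` B); first exact: GC.
  suff -> : (setT `\` E) `+` (setT `\` B) = E `+` B by [].
  by rewrite !setTD -!setTYC setYA [setT `+` E `+` setT]setYC setYA setYK set0Y.
- move=> F GF; split; first by apply: bigcup_measurable => k _; case: (GF k).
  have /choice[B hB] n : exists B, G B /\ P.-negligible (F n `+` B).
    by case: (GF n) => _ [B]; exists B.
  exists (\bigcup_n B n); first by apply: GU => n; case: (hB n).
  apply: (@negligibleS _ _ _ _ (\bigcup_n (F n `+` B n))).
    move=> z [[[n _ Fz] nB]|[[n _ Bz] nF]]; exists n => //.
      by left; split => // Bnz; apply: nB; exists n.
    by right; split => // Fnz; apply: nF; exists n.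
  by apply: negligible_bigcup => n; case: (hB n).
Qed.

Lemma mod_closure_negligible E B : mod_closure B -> measurable E ->
  P.-negligible (E `+` B) -> mod_closure E.
Proof.
move=> [_ [B' GB' nBB']] mE nEB; split => //; exists B' => //.
have -> : E `+` B' = (E `+` B) `+` (B `+` B').
  by rewrite setYA -(setYA E) setYK setY0.
by apply: (negligibleS _ (negligibleU nEB nBB')); rewrite setYE; apply: subDsetl.
Qed.

Lemma mod_closure_setD_negligible E Q : measurable E -> P.-negligible Q ->
  mod_closure (E `\` Q) -> mod_closure E.
Proof.
move=> mE nQ MEQ; apply: (mod_closure_negligible MEQ mE).
apply: (negligibleS _ nQ) => z [[Ez nEQz]|[[Ez _] //]].
by apply: contrapT => nQz; apply: nEQz.
Qed.

(* The liminf of the approximants lies in the closure and differs from [E] by a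
   subset of the limsup of the error sets, which is null by Borel-Cantelli. *)
Lemma mod_closure_approx E : measurable E ->
  (forall e : R, (0 < e)%R -> exists2 Z, mod_closure Z & P (E `+` Z) <= e%:E) ->
  mod_closure E.
Proof.
move=> mE approx.
have /choice[Z hZ] n : exists Z, mod_closure Z /\ P (E `+` Z) <= (1 / (2 ^ n.+1)%:R)%:E.
  have [|Z ? ?] := approx (1 / (2 ^ n.+1)%:R)%R; last by exists Z.
  by rewrite mul1r invr_gt0 ltr0n expn_gt0.
have mZ n : measurable (Z n) by case: (hZ n) => /mod_closure_measurable.
have mEZ n : measurable (E `+` Z n) by apply: measurableU; exact: measurableD.
have [M0 MC MU] := sigma_algebra_mod_closure.
pose B := \bigcup_m \bigcap_(n in [set n | (m <= n)%N]) Z n.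
have MB : mod_closure B.
  apply: (MU) => m; rewrite -[X in mod_closure X]setCK -setTD; apply: (MC).
  rewrite setC_bigcap bigcup_mkcond; apply: (MU) => n.
  by case: ifP => _ //; rewrite -setTD; apply: (MC); case: (hZ n).
apply: (mod_closure_negligible MB mE); exists (lim_sup_set (fun n => E `+` Z n)).
split.
- by apply: bigcapT_measurable => k; apply: bigcup_measurable => j _.
- apply: lim_sup_set_cvg0 => //; apply: le_lt_trans (ltry 1).
  apply: le_trans (epsilon_trick0 xpredT ler01).
  by apply: lee_nneseries => // n _; case: (hZ n); rewrite mul1r.
- move=> z [[Ez nBz]|[Bz nEz]] m _.
  + have : ~ (\bigcap_(n in [set n | (m <= n)%N]) Z n) z by move=> h; apply: nBz; exists m.
    by move=> /existsNP[n /not_implyP[mn nZ]]; exists n => //; left.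
  + case: Bz => m' _ hm'; exists (maxn m m') => /=; first by rewrite leq_maxl.
    by right; split => //; apply: hm'; rewrite /= leq_maxr.
Qed.

End completion_modulo_null.

Section N_measurable_modulo.
Context (R : realType) (d : measure_display) (X : measurableType d).
Local Notation T := (XstarM R X).
Variable P : {measure set T -> \bar R}.
Variable G : set (set T).
Hypothesis salgG : sigma_algebra setT G.
Hypothesis measG : G `<=` measurable.

Local Notation M := (mod_closure P G).
Local Notation TM := (g_sigma_algebraType M).

Definition N_mod_measurable (A : set X) :=
  forall S : set (\bar R), measurable S -> M (N A @^-1` S).

Lemma measurable_mod_closureE : (measurable : set (set TM)) = M.
Proof. exact/measurable_g_measurableTypeE/sigma_algebra_mod_closure. Qed.

Definition Nmod (A : set X) : TM -> \bar R := N A.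

Lemma measurable_fun_mod_closure (f : TM -> \bar R) S :
  measurable_fun [set: TM] f -> measurable S -> M (f @^-1` S).
Proof.
by move=> mf mS; have := mf measurableT S mS; rewrite setTI measurable_mod_closureE.
Qed.

Lemma N_mod_measurableP A : N_mod_measurable A <-> measurable_fun [set: TM] (Nmod A).
Proof.
split => [NA _ S mS|mN S]; last exact: measurable_fun_mod_closure.
by rewrite setTI measurable_mod_closureE; exact: NA.
Qed.

Lemma N_mod_measurable_star (D : set (set X)) A : D `<=` measurable ->
  star D `<=` G -> D A -> N_mod_measurable A.
Proof.
move=> Dm DG DA S mS; apply/(sub_mod_closure P measG)/DG.
by apply: sub_sigma_algebra; exists A, S.
Qed.

Lemma N_mod_measurable_bigcup (A : (set X)^nat) : (forall n, measurable (A n)) ->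
  trivIset setT A -> (forall n, N_mod_measurable (A n)) ->
  N_mod_measurable (\bigcup_n A n).
Proof.
move=> mA tA NA; apply/N_mod_measurableP.
have -> : Nmod (\bigcup_n A n) = fun g => \sum_(n <oo) Nmod (A n) g.
  apply/funext => g; rewrite /Nmod NE measure_bigcup //= /N.
  by congr (limn _); apply/funext => n; apply: eq_bigl => i; rewrite in_setT.
apply: ge0_emeasurable_sum; first by move=> k x _ _; exact: count_ge0.
by move=> k _; apply/N_mod_measurableP.
Qed.

(* [N (A `\` B) = N A - N B] wherever [N A] is finite, i.e. almost surely. *)
Lemma N_mod_measurable_setD (A B : set X) : measurable A -> measurable B ->
  B `<=` A -> N_mod_measurable A -> N_mod_measurable B ->
  P.-negligible (N A @^-1` [set +oo]) -> N_mod_measurable (A `\` B).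
Proof.
move=> mA mB BA NA NB nAoo S mS.
apply: (mod_closure_setD_negligible _ nAoo).
  by apply: N_measurable => //; exact: measurableD.
have NAB (g : Xstar R X) : N A g != +oo -> N (A `\` B) g = N A g - N B g.
  by move=> Ag; rewrite !NE measureD ?ltey // setIidr.
have -> : N (A `\` B) @^-1` S `\` N A @^-1` [set +oo] =
    ((Nmod A \- Nmod B) @^-1` S) `&` ~` (N A @^-1` [set +oo]).
  by apply/seteqP; split => g /= [hS /eqP Ag]; (split; last exact/eqP);
    [rewrite /Nmod -NAB | rewrite NAB].
rewrite -measurable_mod_closureE; apply: measurableI.
  rewrite measurable_mod_closureE; apply: measurable_fun_mod_closure => //.
  by apply: emeasurable_funB; apply/N_mod_measurableP.
by apply: measurableC; rewrite measurable_mod_closureE; apply: NA.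
Qed.

End N_measurable_modulo.

Section multiple_points.
Context (R : realType) (d : measure_display) (X : measurableType d).
Local Notation T := (XstarM R X).
Variable mu : {measure set X -> \bar R}.
Variable P : probability T R.
Hypothesis hP : poisson_suspension_measure mu P.

Definition multi_point (c : set X) : set T := [set g | 1 < N c g].

Lemma multi_pointE c : measurable c -> multi_point c =
  ~` ([set g : Xstar R X | N c g = (0%:R : R)%:E] `|`
      [set g : Xstar R X | N c g = (1%:R : R)%:E]).
Proof.
move=> mc; apply/seteqP; split => g; rewrite /multi_point /=.
  by move=> /[swap] -[] ->; rewrite lte_fin ?ltr10 ?ltxx.
move=> N01; rewrite NE; case: (count_nat g mc) => [->|[[|[|k]] Nk]].
- exact: ltry.
- by case: N01; left.
- by case: N01; right.
- by rewrite Nk lte_fin (ltr_nat _ 1 k.+2).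
Qed.

Lemma N_le1_off_multi_point (c : (set X)^nat) m (g : T) :
  ~ (\big[setU/set0]_(j < m) multi_point (c j)) g ->
  forall j, (j < m)%N -> N (c j) g <= 1.
Proof.
move=> good_g j jm; rewrite leNgt; apply/negP => bad_j; apply: good_g.
exact: (@bigsetU_sup _ j m (fun j => multi_point (c j))).
Qed.

Lemma measurable_N_eq c (x : \bar R) : measurable c ->
  measurable ([set g | N c g = x] : set T).
Proof.
by move=> mc; change (measurable (N c @^-1` [set x] : set T)); apply: N_measurable.
Qed.

Lemma measurable_multi_point c : measurable c -> measurable (multi_point c).
Proof.
by move=> mc; rewrite multi_pointE //; apply/measurableC/measurableU;
  apply: measurable_N_eq.
Qed.

Lemma multi_point_le c : measurable c -> mu c < +oo ->
  P (multi_point c) <= mu c * mu c.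
Proof.
move=> mc mcoo; have [_ /(_ c mc) [/(_ mcoo) Pk _]] := hP.
have mc0 := measure_ge0 mu c.
rewrite multi_pointE // probability_setC; last first.
  by apply: measurableU; apply: measurable_N_eq.
rewrite measureU; try exact: measurable_N_eq; last first.
  by apply/seteqP; split => g //= [-> /eqP]; rewrite eqe (eqr_nat R 0 1).
rewrite /= (Pk 0%N) (Pk 1%N); set m := fine (mu c).
have -> : mu c = m%:E by rewrite /m fineK // ge0_fin_numE.
have m0 : (0 <= m)%R by exact: fine_ge0.
rewrite -!EFinD -EFinM lee_fin expr0 expr1 !divr1 mulr1.
by have := expR_ge1Dx (- m); nra.
Qed.

Lemma multi_point_bigsetU_le (c : (set X)^nat) (m : nat) (eps : R) :
  (forall j, measurable (c j)) -> (forall j, mu (c j) <= eps%:E) ->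
  mu (\big[setU/set0]_(j < m) c j) < +oo ->
  P (\big[setU/set0]_(j < m) multi_point (c j)) <= eps%:E * \sum_(j < m) mu (c j).
Proof.
move=> mc ce cfin.
apply: le_trans (Boole_inequality P (fun i _ => measurable_multi_point (mc i))) _.
have eps0 : (0 <= eps%:E) by apply: le_trans (ce 0%N); exact: measure_ge0.
rewrite ge0_sume_distrr; last by move=> i _; exact: measure_ge0.
apply: lee_sum => i _.
have ci_fin : mu (c i) < +oo.
  apply: le_lt_trans cfin; apply: le_measure; rewrite ?inE //.
    exact: bigsetU_measurable.
  exact: bigsetU_sup.
apply: le_trans (multi_point_le (mc i) ci_fin) _.
by apply: lee_wpmul2r => //; exact: measure_ge0.
Qed.

End multiple_points.

Section non_atomic.
Context (R : realType) (d : measure_display) (X : measurableType d).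
Variable mu : {measure set X -> \bar R}.
Variable C : set (set X).
Hypothesis subC : is_sub_sigma_algebra C.
Hypothesis naC : non_atomic_on mu C.

Let salgC : sigma_algebra setT C := subC.1.
Let measC A : C A -> measurable A := subC.2 A.

Lemma non_atomic_halve A : C A -> 0 < mu A -> mu A < +oo ->
  exists B, [/\ C B, B `<=` A, 0 < mu B & mu B + mu B <= mu A].
Proof.
move=> CA A0 Aoo.
have : ~ (forall B, C B -> B `<=` A -> mu B = 0 \/ mu (A `\` B) = 0).
  by move=> h; apply: (naC (A := A)); split.
move=> /existsNP[B /not_implyP[CB /not_implyP[BA /not_orP[B0 AB0]]]].
have muA : mu A = mu (A `\` B) + mu B.
  by rewrite (measureDI mu (measC CA) (measC CB)) setIidr.
have B_gt0 : 0 < mu B by rewrite lt0e measure_ge0 andbT; apply/eqP.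
have AB_gt0 : 0 < mu (A `\` B) by rewrite lt0e measure_ge0 andbT; apply/eqP.
have [le|/ltW lt] := leP (mu B) (mu (A `\` B)).
  by exists B; split => //; rewrite muA leeD.
by exists (A `\` B); split => //; [exact: sigma_algebraD|rewrite muA leeD].
Qed.

Lemma non_atomic_small A (e : R) : C A -> 0 < mu A -> mu A < +oo -> (0 < e)%R ->
  exists B, [/\ C B, B `<=` A, 0 < mu B & mu B <= e%:E].
Proof.
move=> CA A0 Aoo e0; set a := fine (mu A).
have muA : mu A = a%:E by rewrite fineK // ge0_fin_numE.
have a0 : (0 < a)%R by rewrite -lte_fin -muA.
have halves n : exists B, [/\ C B, B `<=` A, 0 < mu B & mu B <= (a / 2 ^+ n)%:E].
  elim: n => [|n [B [CB BA B0 Ble]]].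
    by exists A; split => //; rewrite expr0 divr1 muA.
  have Boo : mu B < +oo by apply: le_lt_trans Ble (ltry _).
  have [B' [CB' B'B B'0 B'le]] := non_atomic_halve CB B0 Boo.
  exists B'; split => //; first exact: subset_trans B'B BA.
  have B'fin : mu B' \is a fin_num.
    by rewrite ge0_fin_numE // (le_lt_trans _ Boo) // le_measure ?inE //; exact: measC.
  move: (le_trans B'le Ble); rewrite -(fineK B'fin) -EFinD !lee_fin.
  by rewrite exprSr invfM mulrA; lra.
pose k := (Num.truncn (a / e)).+1.
have ae_k : (a / e < 2 ^+ k)%R.
  by apply: lt_trans (truncnS_gt _) _; rewrite -natrX ltr_nat ltn_expl.
have [B [CB BA B0 Ble]] := halves k.
exists B; split => //; apply: le_trans Ble _; rewrite lee_fin ler_pdivrMr ?exprn_gt0 //.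
by move: ae_k; rewrite ltr_pdivrMr // mulrC => /ltW.
Qed.

Lemma near_sup_subset (e : R) (D : set X) : (0 < e)%R ->
  exists B, [/\ C B, B `<=` D, mu B <= e%:E &
    forall B', C B' -> B' `<=` D -> mu B' <= e%:E -> mu B' <= mu B + mu B].
Proof.
move=> e0.
set s := ereal_sup [set mu B | B in [set B | [/\ C B, B `<=` D & mu B <= e%:E]]].
have s_ub B' : C B' -> B' `<=` D -> mu B' <= e%:E -> mu B' <= s.
  by move=> *; apply: ereal_sup_ubound; exists B'.
have s_le : s <= e%:E by apply: ge_ereal_sup => _ [B [_ _ Ble] <-].
have [s0|s_gt0] := eqVneq s 0.
  have [C0 _ _] := salgC.
  exists set0; rewrite measure0 lee_fin ltW //; split => // B' CB' B'D B'le.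
  by rewrite adde0 -s0; apply: s_ub.
have s_ge0 : 0 <= s.
  by rewrite -(measure0 mu) s_ub //; [case: salgC|rewrite measure0 lee_fin ltW].
have sfin : s \is a fin_num by rewrite ge0_fin_numE // (le_lt_trans s_le) ?ltry.
have : (fine s / 2)%:E < s.
  by rewrite -[ltRHS](fineK sfin) lte_fin ltr_pdivrMr // ltr_pMr ?ltr1n //
    -lte_fin fineK // lt0e s_gt0.
move=> /ereal_sup_gt[_ [B [CB BD Ble] <-] Bgt].
exists B; split => // B' CB' B'D B'le; apply: le_trans (s_ub _ CB' B'D B'le) _.
by rewrite -(fineK sfin) (splitr (fine s)) EFinD leeD // ltW.
Qed.

Section greedy_exhaustion.
Variables (D : set X) (e : R).
Hypotheses (CD : C D) (Doo : mu D < +oo) (e_gt0 : (0 < e)%R).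

Let pick A := sval (cid (near_sup_subset A e_gt0)).
Let pickP A := svalP (cid (near_sup_subset A e_gt0)).

Let rest n := iter n (fun A => A `\` pick A) D.

Let C_rest n : C (rest n).
Proof. by elim: n => //= n IH; apply: sigma_algebraD => //; case: (pickP (rest n)). Qed.

Let rest_nonincreasing : nonincreasing_seq rest.
Proof. by apply/nonincreasing_seqP => n; apply/subsetPset => z /= []. Qed.

Let restD n : rest n `\` rest n.+1 = pick (rest n).
Proof. by rewrite /= setDD setIidr //; case: (pickP (rest n)). Qed.

Let rest_sub n : rest n `<=` D.
Proof. exact/subsetPset/(rest_nonincreasing (leq0n n)). Qed.

Let rest_lty n : mu (rest n) < +oo.
Proof. by apply: le_lt_trans Doo; apply: le_measure; rewrite ?inE; auto. Qed.

Let sum_pick_le K : \sum_(n < K) mu (pick (rest n)) <= mu D.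
Proof.
under eq_bigr do rewrite -restD.
rewrite -(@measure_bigsetU _ _ _ mu (fun n => rest n `\` rest n.+1)); last 2 first.
- by move=> n; apply/measC/(sigma_algebraD salgC).
- exact: trivIset_nonincreasing_setD.
rewrite bigsetU_nonincreasing_setD //; apply: le_measure; rewrite ?inE.
- by apply/measC/(sigma_algebraD salgC).
- exact: measC.
- exact: subDsetl.
Qed.

(* A [C]-subset [B] of positive measure left in every [rest n] would force every
   greedy choice to have measure at least [mu B / 2], although they are disjoint
   subsets of [D]. *)
Let mu_bigcap_rest : mu (\bigcap_n rest n) = 0.
Proof.
have CI : C (\bigcap_n rest n) by exact: sigma_algebra_bigI.
apply/eqP; rewrite eq_le measure_ge0 andbT leNgt; apply/negP => I_gt0.
have Ioo : mu (\bigcap_n rest n) < +oo.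
  by apply: le_lt_trans (rest_lty 0); apply: le_measure; rewrite ?inE; auto;
    move=> z; apply.
have [B [CB BI B_gt0 Ble]] := non_atomic_small CI I_gt0 Ioo e_gt0.
have Bfin : mu B \is a fin_num.
  by rewrite ge0_fin_numE // (le_lt_trans _ Ioo) // le_measure ?inE; auto.
set b := fine (mu B); have b_gt0 : (0 < b)%R by rewrite -lte_fin fineK.
have B_le n : b%:E <= mu (pick (rest n)) + mu (pick (rest n)).
  rewrite fineK //; case: (pickP (rest n)) => _ _ _; apply => //.
  by move=> z /BI; apply.
have Kb_le K : (K%:R * b)%:E <= mu D + mu D.
  apply: le_trans (leeD (sum_pick_le K) (sum_pick_le K)); rewrite -big_split /=.
  elim: K => [|K IH]; first by rewrite big_ord0 mul0r.
  by rewrite big_ord_recr /= -natr1 mulrDl mul1r EFinD leeD.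
set dD := fine (mu D); have Dfin : mu D \is a fin_num by rewrite ge0_fin_numE.
have := Kb_le (Num.truncn ((dD + dD) / b)).+1.
rewrite -(fineK Dfin) -EFinD lee_fin -ler_pdivlMr // => /(lt_le_trans (truncnS_gt _)).
by rewrite ltxx.
Qed.

Let rest_small : exists N, mu (rest N) < e%:E.
Proof.
have mu_rest_cvg : (mu \o rest) @ \oo --> 0.
  rewrite -mu_bigcap_rest; apply: nonincreasing_cvg_mu => //.
  - by move=> n; apply: measC.
  - exact/measC/(sigma_algebra_bigI salgC).
have mu_rest_ni : nonincreasing_seq (mu \o rest).
  move=> n m nm; apply: le_measure; rewrite ?inE; try exact: measC.
  exact/subsetPset/rest_nonincreasing.
have : ereal_inf ((mu \o rest) @` setT) < e%:E.
  by rewrite -(cvg_lim _ (ereal_nonincreasing_cvgn mu_rest_ni)) // (cvg_lim _ mu_rest_cvg).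
by move=> /ereal_inf_lt[_ [N _ <-]]; exists N.
Qed.

Lemma non_atomic_partition : exists (c : (set X)^nat) (m : nat),
  [/\ forall j, C (c j), trivIset setT c, \big[setU/set0]_(j < m) c j = D &
      forall j, mu (c j) <= e%:E].
Proof.
have [N restN] := rest_small.
pose E j := if (j <= N)%N then rest j else set0.
have CE j : C (E j) by rewrite /E; case: ifP => // _; case: salgC.
have niE : nonincreasing_seq E.
  apply/nonincreasing_seqP => n; apply/subsetPset; rewrite /E.
  case: (leqP n.+1 N) => [SnN|_]; last exact: sub0set.
  by rewrite (ltnW SnN) => z /= [].
exists (fun j => E j `\` E j.+1), N.+1; split.
- by move=> j; apply: sigma_algebraD.
- exact: trivIset_nonincreasing_setD.
- by rewrite bigsetU_nonincreasing_setD // /E leq0n ltnn setD0.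
- move=> j; rewrite /E; case: (ltngtP j N) => [_|_|->].
  + by rewrite restD; case: (pickP (rest j)).
  + by rewrite set0D measure0 lee_fin ltW.
  + by rewrite setD0 ltW.
Qed.

End greedy_exhaustion.

End non_atomic.

Section poisson_suspension_join.
Context (R : realType) (d : measure_display) (X : measurableType d).
Local Notation T := (XstarM R X).
Variable mu : {measure set X -> \bar R}.
Variables (alpha beta C : set (set X)).
Variable P : probability T R.
Hypotheses (subA : is_sub_sigma_algebra alpha) (subB : is_sub_sigma_algebra beta).
Hypotheses (subC : is_sub_sigma_algebra C) (naC : non_atomic_on mu C).
Hypothesis hP : poisson_suspension_measure mu P.

Local Notation CA := (sjoin C alpha).
Local Notation CB := (sjoin C beta).
Local Notation G := (sjoin_star (star (R := R) CA) (star (R := R) CB)).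

Let salgCA : sigma_algebra setT CA := smallest_sigma_algebra _ _.
Let salgCB : sigma_algebra setT CB := smallest_sigma_algebra _ _.
Let salgG : sigma_algebra setT G := smallest_sigma_algebra _ _.
Let measC : C `<=` measurable := subC.2.
Let measCA : CA `<=` measurable := sjoin_sub_measurable subC.2 subA.2.
Let measCB : CB `<=` measurable := sjoin_sub_measurable subC.2 subB.2.

Let measG : G `<=` measurable.
Proof.
apply: smallest_sub; first exact: sigma_algebra_measurable.
by move=> E [/(star_sub_measurable measCA)|/(star_sub_measurable measCB)].
Qed.

Let N_mod_measurable_CA A : CA A -> N_mod_measurable P G A.
Proof.
by apply: (N_mod_measurable_star P measG measCA) => E ?; apply: sub_sigma_algebra; left.
Qed.

Let N_mod_measurable_CB A : CB A -> N_mod_measurable P G A.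
Proof.
by apply: (N_mod_measurable_star P measG measCB) => E ?; apply: sub_sigma_algebra; right.
Qed.

Lemma fine_partition_multi_point D (del : R) : C D -> mu D < +oo -> (0 < del)%R ->
  exists (c : (set X)^nat) (m : nat), [/\ forall j, C (c j), trivIset setT c,
    \big[setU/set0]_(j < m) c j = D &
    P (\big[setU/set0]_(j < m) multi_point (c j)) <= del%:E].
Proof.
move=> CD Doo del_gt0; set dD := fine (mu D).
have dD_ge0 : (0 <= dD)%R by apply/fine_ge0/measure_ge0.
have e_gt0 : (0 < del / (dD + 1))%R by rewrite divr_gt0 // ltr_wpDl.
have [c [m [Cc tc Uc ce]]] := non_atomic_partition subC naC CD Doo e_gt0.
exists c, m; split => //.
have mc j : measurable (c j) by apply/measC/Cc.
apply: le_trans (multi_point_bigsetU_le hP mc ce _) _; first by rewrite Uc.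
have -> : \sum_(j < m) mu (c j) = dD%:E.
  by rewrite -(@measure_bigsetU _ _ _ mu c mc tc) Uc fineK // ge0_fin_numE.
rewrite -EFinM lee_fin mulrAC ler_pdivrMr ?ltr_wpDl //.
by apply: ler_wpM2l; [exact: ltW|rewrite -/dD; lra].
Qed.

Lemma N_finite_ae D : C D -> mu D < +oo -> P.-negligible (N D @^-1` [set +oo]).
Proof.
move=> CD Doo.
have mND : measurable (N D @^-1` [set +oo] : set T) by apply: N_measurable; auto.
apply/(negligibleP _ mND)/eqP; rewrite eq_le measure_ge0 andbT.
apply/lee_addgt0Pr => del del_gt0.
have [c [m [Cc tc Uc Pbad]]] := fine_partition_multi_point CD Doo del_gt0.
rewrite add0e; apply: le_trans Pbad; apply: le_measure; rewrite ?inE.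
- exact: mND.
- by apply: bigsetU_measurable => j _; apply: measurable_multi_point; exact: measC.
move=> g /= NDg; apply: contrapT => /N_le1_off_multi_point g_le1.
move: NDg; rewrite NE -Uc measure_bigsetU //; last by move=> j; apply/measC.
have : \sum_(j < m) count g (c j) \is a fin_num.
  apply/sum_fin_numP => j _ _; rewrite ge0_fin_numE ?count_ge0 //.
  exact: le_lt_trans (g_le1 j (ltn_ord j)) (ltry _).
by move=> /[swap] ->.
Qed.

Lemma N_mod_measurable_setI x y D : CA x -> x `<=` D -> C D -> mu D < +oo ->
  beta y -> N_mod_measurable P G (x `&` y).
Proof.
move=> CAx xD CD Doo By S mS.
have mxy : measurable (x `&` y) by apply: measurableI; [exact: measCA|exact: subB.2].
apply: (mod_closure_approx salgG measG); first exact: N_measurable.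
move=> del del_gt0.
have [c [m [Cc tc Uc Pbad]]] := fine_partition_multi_point CD Doo del_gt0.
have mc j : measurable (c j) by apply/measC/Cc.
pose f : g_sigma_algebraType (mod_closure P G) -> \bar R :=
  fun g => \sum_(j < m) (Nmod (c j `&` x) g * Nmod (c j `&` y) g).
have mf : measurable_fun setT f.
  apply: emeasurable_sum => j; apply: emeasurable_funM;
    apply/(N_mod_measurableP P salgG measG).
  - by apply: N_mod_measurable_CA; apply: (sigma_algebraI salgCA) => //; apply: sjoinl.
  - by apply: N_mod_measurable_CB; apply: (sigma_algebraI salgCB);
      [apply: sjoinl|apply: sjoinr].
have MfS : mod_closure P G (f @^-1` S) by exact: measurable_fun_mod_closure.
exists (f @^-1` S) => //.
have Nf g : ~ (\big[setU/set0]_(j < m) multi_point (c j)) g -> N (x `&` y) g = f g.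
  move=> /N_le1_off_multi_point c_le1.
  rewrite NE (measure01_partition_setI (count_nat g) mc tc c_le1) //.
  - exact: measCA.
  - exact: subB.2.
  - by rewrite Uc.
apply: le_trans Pbad; apply: le_measure; rewrite ?inE.
- have mfS := mod_closure_measurable MfS.
  by apply: measurableU; apply: measurableD => //; exact: N_measurable.
- by apply: bigsetU_measurable => j _; apply: measurable_multi_point.
by move=> g gS; apply: contrapT => /Nf fg; move: gS; rewrite /setY /= fg; tauto.
Qed.

Lemma N_mod_measurable_local_join D A : C D -> mu D < +oo -> sjoin CA beta A ->
  N_mod_measurable P G (A `&` D).
Proof.
move=> CD Doo; have mD := measC CD.
pose H := [set A | measurable A /\ N_mod_measurable P G (A `&` D)].
pose Pi := [set A | exists x y, [/\ CA x, beta y & A = x `&` y]].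
have PiI : setI_closed Pi.
  move=> _ _ [x [y [CAx By ->]]] [x' [y' [CAx' By' ->]]].
  exists (x `&` x'), (y `&` y'); split; last by rewrite setIACA.
  - exact: (sigma_algebraI salgCA).
  - exact: (sigma_algebraI subB.1).
have PiH : Pi `<=` H.
  move=> _ [x [y [CAx By ->]]]; split.
    by apply: measurableI; [exact: measCA|exact: subB.2].
  rewrite setIAC; apply: (N_mod_measurable_setI _ (@subIsetr _ x D) CD Doo By).
  by apply: (sigma_algebraI salgCA) => //; apply: sjoinl.
have dH : dynkin H.
  split.
  - split; first exact: measurableT.
    by rewrite setTI; apply: N_mod_measurable_CA; apply: sjoinl.
  - move=> B [mB NB]; split; first exact: measurableC.
    have -> : ~` B `&` D = D `\` (B `&` D) by rewrite setDIr setDv setU0 setDE setIC.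
    apply: (N_mod_measurable_setD salgG measG) => //.
    + exact: measurableI.
    + by apply: N_mod_measurable_CA; apply: sjoinl.
    + exact: N_finite_ae.
  - move=> F tF HF; split; first by apply: bigcup_measurable => n _; case: (HF n).
    rewrite setI_bigcupl; apply: (N_mod_measurable_bigcup salgG measG).
    + by move=> n; apply: measurableI => //; case: (HF n).
    + by move=> i j _ _ [z [[Fi _] [Fj _]]]; apply: tF => //; exists z.
    + by move=> n; case: (HF n).
have sPi : sjoin CA beta `<=` <<s Pi >>.
  apply: smallest_sub; first exact: smallest_sigma_algebra.
  move=> B [CAB|BB]; apply: sub_sigma_algebra.
  - by exists B, setT; rewrite setIT; split => //; exact: (sigma_algebraT subB.1).
  - by exists setT, B; rewrite setTI; split => //; exact: sigma_algebraT.
move=> /sPi; rewrite -setI_closed_g_dynkin_g_sigma_algebra //.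
by move=> /(smallest_sub dH PiH) [].
Qed.

Lemma N_mod_measurable_join A : sigma_finite_on mu C -> sjoin CA beta A ->
  N_mod_measurable P G A.
Proof.
move=> [F [CF UF Foo]] CABA.
have CFd k : C (seqDU F k).
  by apply: (sigma_algebraD subC.1) => //; apply: (sigma_algebra_bigsetU subC.1).
have mA : measurable A by apply: (sjoin_sub_measurable measCA subB.2).
have -> : A = \bigcup_k (A `&` seqDU F k).
  by rewrite -setI_bigcupr -seqDU_bigcup_eq UF setIT.
apply: (N_mod_measurable_bigcup salgG measG).
- by move=> k; apply: measurableI => //; apply: measC.
- by move=> i j _ _ [z [[_ Fi] [_ Fj]]]; apply: (trivIset_seqDU F) => //; exists z.
- move=> k; apply: N_mod_measurable_local_join => //.
  apply: le_lt_trans (Foo k); apply: le_measure; rewrite ?inE; try exact: measC.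
  exact: subset_seqDU.
Qed.

Lemma star_join_eq_mod : sigma_finite_on mu C -> eq_mod P (star (sjoin CA beta)) G.
Proof.
move=> sfC; split => [A|B GB].
  have : star (sjoin CA beta) `<=` mod_closure P G.
    apply: smallest_sub; first exact: sigma_algebra_mod_closure.
    by move=> _ [A' [S [CABA' mS ->]]]; apply: N_mod_measurable_join.
  move=> /[apply] -[mA [B GB nAB]]; exists B; split => //.
  apply: measure_negligible nAB.
  by apply: measurableU; apply: measurableD => //; exact: measG.
exists B; split; last by rewrite setDv setU0 measure0.
have CB_sub : CB `<=` sjoin CA beta.
  apply: smallest_sub; first exact: smallest_sigma_algebra.
  by move=> E [CE|BE]; [apply: sjoinl; apply: sjoinl|apply: sjoinr].
move: B GB; apply: smallest_sub; first exact: smallest_sigma_algebra.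
move=> E [CAE|CBE]; first by apply: (star_mono _ CAE) => E'; apply: sjoinl.
exact: (star_mono CB_sub CBE).
Qed.

End poisson_suspension_join.

Theorem lemma2p3 (R : realType) (d : measure_display) (X : measurableType d)
    (mu : {measure set X -> \bar R})
    (alpha beta C : set (set X))
    (P : probability (XstarM R X) R) :
  standard_borel R X ->
  sigma_finite setT mu ->
  is_sub_sigma_algebra alpha -> is_sub_sigma_algebra beta -> is_sub_sigma_algebra C ->
  sigma_finite_on mu C ->
  non_atomic_on mu C ->
  poisson_suspension_measure mu P ->
  eq_mod P (star (sjoin (sjoin C alpha) beta))
           (sjoin_star (star (sjoin C alpha)) (star (sjoin C beta))).
Proof.
move=> _ _ subA subB subC sfC naC hP.
exact: (star_join_eq_mod subA subB subC naC hP sfC).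
Qed.
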